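(* Assume all deadlines are positive integers. For $\bar d\in\mathcal D$, an integer $q$ with $2\le q\le\bar d$, and $i\in\{0,\dots,q-1\}$, let $\mathcal K(\bar d,i,q)=\{k\in\mathcal K:\bar d_k\le\bar d,\ i\,\bar d/q<t_k\le(i+1)\,\bar d/q\}$. Then for every feasible solution $(\rho_{kp})$ of $B(\mathcal K)$, the vector $\rho_k=\sum_{p\in\mathcal P}\rho_{kp}$ satisfies $$\sum_{i=1}^{q-1}\sum_{k\in\mathcal K(\bar d,i,q)} i\,\rho_k\le (q-1)\,|\mathcal P|.$$
   Context: Let $\mathcal O$ be a finite set of orders, each order $o\in\mathcal O$ having a deadline $\bar d_o>0$; let $\mathcal D=\{\bar d_o: o\in\mathcal O\}$ be the set of distinct deadlines and let $\mathcal P$ be a finite nonempty set of pickers. Let $\mathcal K$ be a finite set of routes; each route $k\in\mathcal K$ has a nonempty batch of orders $\mathcal O_k\subseteq\mathcal O$ and a duration $t_k>0$, and its deadline is $\bar d_k=\min_{o\in\mathcal O_k}\bar d_o$. Write $\mathcal K(o)=\{k\in\mathcal K: o\in\mathcal O_k\}$ and $\mathcal K(\bar d)=\{k\in\mathcal K:\bar d_k\le\bar d\}$. Formulation $B(\mathcal K)$: binary variables $\rho_{kp}\in\{0,1\}$ ($k\in\mathcal K,p\in\mathcal P$); minimize $\sum_{k\in\mathcal K}t_k\sum_{p\in\mathcal P}\rho_{kp}$ subject to $\sum_{k\in\mathcal K(o)}\sum_{p\in\mathcal P}\rho_{kp}\ge 1$ for all $o\in\mathcal O$, and $\sum_{k\in\mathcal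 K(\bar d)}t_k\rho_{kp}\le\bar d$ for all $\bar d\in\mathcal D$, $p\in\mathcal P$. *)

From HB Require Import structures.
From mathcomp Require Import all_boot all_order all_algebra.
Set Implicit Arguments. Unset Strict Implicit. Unset Printing Implicit Defensive.
Import Order.TTheory GRing.Theory Num.Theory.

(* Deadline of a route: min over its (nonempty) batch of order deadlines.
   The seed of the fold is the largest deadline, so for a nonempty batch
   this is exactly min_{o in O_k} dd o. *)
Definition route_deadline (O K : finType) (dd : O -> nat) (batch : K -> {set O})
  (k : K) : nat :=
  \big[minn/ (\max_(o : O) dd o)%N]_(o in batch k) dd o.

Definition in_deadlines (O : finType) (dd : O -> nat) (dbar : nat) : Prop :=
  exists o : O, dd o = dbar.

Definition feasible_B (R : realFieldType) (O K P : finType) (dd : O -> nat)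
  (batch : K -> {set O}) (t : K -> R) (rho : K -> P -> bool) : Prop :=
  (forall o : O, (1 <= \sum_(k : K | o \in batch k) \sum_(p : P) (rho k p : nat))%N)
  /\ (forall (dbar : nat) (p : P), in_deadlines dd dbar ->
       (\sum_(k : K | (route_deadline dd batch k <= dbar)%N)
           t k * (rho k p)%:R <= (dbar%:R : R))%R).

Definition rho_route (K P : finType) (rho : K -> P -> bool) (k : K) : nat :=
  \sum_(p : P) (rho k p : nat).

Definition in_Kdiq (R : realFieldType) (O K : finType) (dd : O -> nat)
  (batch : K -> {set O}) (t : K -> R) (dbar i q : nat) (k : K) : bool :=
  (route_deadline dd batch k <= dbar)%N &&
  ((i%:R * dbar%:R / q%:R < t k)%R && (t k <= i.+1%:R * dbar%:R / q%:R)%R).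

From mathcomp Require Import all_boot all_order all_algebra.
Import Order.TTheory GRing.Theory Num.Theory.
Set Implicit Arguments. Unset Strict Implicit.

(* Write c = dbar / q.  The classes K(dbar,i,q) are the routes of deadline at
   most dbar whose duration lies in the interval (i c, (i+1) c]; these
   intervals are disjoint, so every route lies in at most one class and we can
   speak of its class index [route_class k] (0 when it lies in no class with
   1 <= i < q).  A route of class i takes strictly more than i c time.

   Fix a picker p and let N be the sum of the class indices of the routes p
   performs.  Then N c is at most the total time of these routes, which the
   deadline constraint for dbar bounds by dbar, with strict inequality as
   soon as N > 0.  Hence N c < dbar = q c, i.e. N <= q - 1.  Summing this
   per-picker bound over the |P| pickers gives the proposition, because the
   left-hand side of the proposition is exactly the sum of the N's. *)

Lemma ltr_sum_witness (R : numDomainType) (I : finType) (P : pred I)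
    (F G : I -> R) :
  (forall i, P i -> F i <= G i)%R -> (exists i, P i && (F i < G i)%R) ->
  (\sum_(i | P i) F i < \sum_(i | P i) G i)%R.
Proof.
move=> le_FG [i0 /andP [Pi0 lt_i0]].
rewrite (bigD1 i0) //= [X in (_ < X)%R](bigD1 i0) //=.
by apply: ltr_leD => //; apply: ler_sum => i /andP [Pi _]; apply: le_FG.
Qed.

Section DurationClasses.
Variables (R : realFieldType) (O K : finType)
  (dd : O -> nat) (batch : K -> {set O}) (t : K -> R)
  (ht : forall k : K, (0 < t k)%R) (dbar q : nat).

Local Notation inK i k := (in_Kdiq dd batch t dbar i q k).
Local Notation c := ((dbar%:R : R) / q%:R)%R.

(* The class index of a route: the i in [1, q) with k in K(dbar,i,q), or 0. *)
Definition route_class (k : K) : nat := \sum_(1 <= i < q | inK i k) i.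

Lemma in_Kdiq_lower i k : inK i k -> (i%:R * c < t k)%R.
Proof. by rewrite /in_Kdiq mulrA => /and3P [_ ? _]. Qed.

Lemma in_Kdiq_unique i j k : inK i k -> inK j k -> i = j.
Proof.
wlog lt_ij : i j / (i < j)%N.
  by move=> W ki kj; case: (ltngtP i j) => [/W|/W|] // ->.
move=> /and3P [_ _ le_tk] /in_Kdiq_lower; rewrite ltNge => /negP [].
apply: le_trans le_tk _; rewrite -mulrA ler_wpM2r ?ler_nat //.
by rewrite divr_ge0 ?ler0n.
Qed.

Lemma route_class_cases k : route_class k = 0%N \/ inK (route_class k) k.
Proof.
have [/existsP [i /andP [i_ge1 ki]] | no_class] :=
  boolP [exists i : 'I_q, (1 <= i)%N && inK i k]; last first.
  left; rewrite /route_class big_nat_cond big1 // => i /andP [/andP [i_ge1 i_lt] ki].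
  by case/existsP: no_class; exists (Ordinal i_lt); rewrite /= i_ge1.
right; suff -> : route_class k = i by [].
rewrite /route_class big_mkcond (bigD1_seq (nat_of_ord i)) ?iota_uniq //=;
  last by rewrite mem_index_iota i_ge1 ltn_ord.
rewrite (_ : inK i k = true) // big1 ?addn0 // => j j_ne_i; case: ifP => // kj.
by case/eqP: j_ne_i; apply: in_Kdiq_unique kj ki.
Qed.

Lemma route_class_time k (b : bool) :
  ((route_class k * b)%:R * c <= t k * b%:R)%R /\
  ((0 < route_class k * b)%N -> ((route_class k * b)%:R * c < t k * b%:R)%R).
Proof.
case: b; rewrite ?muln1 ?mulr1 ?muln0 ?mulr0 ?mul0r //.
have [-> | kc] := route_class_cases k; first by rewrite mul0r (ltW (ht k)).
by have lt_ck := in_Kdiq_lower kc; split => //; apply: ltW.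
Qed.

Lemma sum_Kdiq_by_route (b : K -> nat) :
  (\sum_(1 <= i < q) \sum_(k : K | inK i k) i * b k =
   \sum_(k : K | (route_deadline dd batch k <= dbar)%N) route_class k * b k)%N.
Proof.
rewrite (exchange_big_dep (fun k => route_deadline dd batch k <= dbar)%N) /=;
  last by move=> i k _ /andP [].
by apply: eq_bigr => k _; rewrite /route_class big_distrl.
Qed.

Lemma picker_class_load (b : K -> bool) : (2 <= q <= dbar)%N ->
  (\sum_(k : K | (route_deadline dd batch k <= dbar)%N) t k * (b k)%:R
     <= (dbar%:R : R))%R ->
  (\sum_(1 <= i < q) \sum_(k : K | inK i k) i * b k <= q - 1)%N.
Proof.
move=> /andP [q_ge2 q_le_dbar] load_le_dbar.
rewrite sum_Kdiq_by_route; set N := (\sum_(k | _) _)%N.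
have [-> // | N_gt0] := posnP N.
have q_gt0 : (0 < q)%N by apply: leq_trans q_ge2.
have load_gt : (N%:R * c < \sum_(k | (route_deadline dd batch k <= dbar)%N)
                             t k * (b k)%:R)%R.
  rewrite /N natr_sum mulr_suml; apply: ltr_sum_witness.
    by move=> k _; case: (route_class_time k (b k)).
  move: N_gt0; rewrite lt0n sum_nat_eq0 => /forallPn [k].
  rewrite negb_imply -lt0n => /andP [k_dl kb_gt0].
  by exists k; rewrite k_dl (route_class_time k (b k)).2.
have : (N%:R * c < dbar%:R :> R)%R by apply: lt_le_trans load_le_dbar.
rewrite mulrA ltr_pdivrMr ?ltr0n // -!natrM ltr_nat mulnC ltn_pmul2l.
- by move=> lt_Nq; rewrite leq_subRL ?(ltnW q_ge2) // add1n.
- by apply: leq_trans q_le_dbar.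
Qed.

End DurationClasses.

Theorem proposition5 (R : realFieldType) (O K P : finType)
  (dd : O -> nat) (batch : K -> {set O}) (t : K -> R)
  (hdd : forall o : O, (0 < dd o)%N)
  (hbatch : forall k : K, batch k != set0)
  (ht : forall k : K, (0 < t k)%R)
  (hP : (0 < #|P|)%N)
  (rho : K -> P -> bool)
  (hfeas : feasible_B dd batch t rho)
  (dbar q : nat) (hdbar : in_deadlines dd dbar)
  (hq : (2 <= q <= dbar)%N) :
  (\sum_(1 <= i < q) \sum_(k : K | in_Kdiq dd batch t dbar i q k)
      i * rho_route rho k <= (q - 1) * #|P|)%N.
Proof.
rewrite /rho_route.
under eq_bigr do under eq_bigr do rewrite big_distrr.
under eq_bigr do rewrite exchange_big.
rewrite exchange_big /= -sum1_card big_distrr /=.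
apply: leq_sum => p _; rewrite muln1.
exact: (picker_class_load ht hq (hfeas.2 dbar p hdbar)).
Qed.
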